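(* Let $R>0$, $L>0$ and let $N$ be a positive integer. Let $\theta_0=1$, $\theta_i=\frac{1+\sqrt{1+4\theta_{i-1}^2}}{2}$ for $i=1,\dots,N-1$, $\theta_N=\frac{1+\sqrt{1+8\theta_{N-1}^2}}{2}$, and define $\zeta^*=(\zeta^*_0,\dots,\zeta^*_{N+2})$ by $\zeta^*_{N+2}=0$, $\zeta^*_{N+1}=\frac{\theta_N-1}{\theta_N^2(2\theta_N-1)}R^2$, $\zeta^*_N=\frac{\theta_N}{\theta_N-1}\zeta^*_{N+1}$, and $\zeta^*_i=\frac{2\theta_i}{2\theta_i-1}\zeta^*_{i+1}$ for $i=0,\dots,N-1$. Let $e_0,\dots,e_N$ be the standard unit vectors of $\mathbb{R}^{N+1}$ and set \[ x_{N+1}=-\sum_{j=0}^{N}\frac{\zeta^*_j-\zeta^*_{N+2}}{\sqrt{\zeta^*_j-\zeta^*_{j+1}}}e_j,\qquad f_N=\frac L2(\zeta^*_N+\zeta^*_{N+1}). \] Then $\|x_{N+1}\|=R$ and $f_N=\frac{LR^2}{2\theta_N^2}$. *)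

From mathcomp Require Import all_boot all_order all_algebra.
From mathcomp Require Import reals.
Set Implicit Arguments. Unset Strict Implicit. Unset Printing Implicit Defensive.
Import Order.TTheory GRing.Theory Num.Theory.
Local Open Scope ring_scope.

Definition enorm (R : realType) (n : nat) (v : 'cV[R]_n) : R :=
  Num.sqrt (\sum_(j < n) (v j 0) ^+ 2).

From mathcomp Require Import all_boot all_order all_algebra.
From mathcomp Require Import reals ring lra.
Import Order.TTheory GRing.Theory Num.Theory.
Local Open Scope ring_scope.

(* Since zeta_(N+2) = 0, the squared norm of x_(N+1) is the sum of the terms
   zeta_j^2 / (zeta_j - zeta_(j+1)).  If zeta_j = d/e * zeta_(j+1) with d - e = 1,
   that term is d * zeta_j: it is 2 theta_j zeta_j for j < N and theta_N zeta_N for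
   j = N.  The recursions for theta are theta_i^2 - theta_i = theta_(i-1)^2 and
   theta_N^2 - theta_N = 2 theta_(N-1)^2, so the partial sums telescope to
   4 theta_(k-1)^2 zeta_k, and the full sum is theta_N (2 theta_N - 1) zeta_N = R^2. *)

Lemma half_1Dsqrt_sqrB (R : rcfType) (c : R) : 0 <= c ->
  ((1 + Num.sqrt c) / 2) ^+ 2 - (1 + Num.sqrt c) / 2 = (c - 1) / 4.
Proof. by move=> c_ge0; rewrite -{3}(sqr_sqrtr c_ge0); field. Qed.

Lemma half_1Dsqrt_ge1 (R : rcfType) (c : R) : 1 <= c -> 1 <= (1 + Num.sqrt c) / 2.
Proof.
move=> c_ge1; have : 1 <= Num.sqrt c by rewrite -sqrtr1 ler_sqrt //; lra.
lra.
Qed.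

Lemma half_1Dsqrt_gt1 (R : rcfType) (c : R) : 1 < c -> 1 < (1 + Num.sqrt c) / 2.
Proof.
move=> c_gt1; have : 1 < Num.sqrt c by rewrite -sqrtr1 ltr_sqrt //; lra.
lra.
Qed.

Lemma sqr_ratio_div_subr (R : fieldType) (d e a : R) :
  e != 0 -> d != e -> a != 0 ->
  (d / e * a) ^+ 2 / (d / e * a - a) = d / (d - e) * (d / e * a).
Proof.
move=> e_neq0 d_neq_e a_neq0.
have de_neq0 : d - e != 0 by rewrite subr_eq0.
have -> : d / e * a - a = (d - e) / e * a by field.
by field; rewrite e_neq0 de_neq0 a_neq0.
Qed.

Lemma ltr_ratio_scale (R : realFieldType) (d e a : R) :
  0 < e < d -> 0 < a -> a < d / e * a.
Proof.
case/andP=> e_gt0 e_lt_d a_gt0.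
by rewrite ltr_pMl // ltr_pdivlMr // mul1r.
Qed.

Section ZetaSequence.

Variables (R : realType) (r : R) (N : nat) (theta zeta : nat -> R).

Hypotheses (r_gt0 : 0 < r) (N_gt0 : (0 < N)%N) (theta0 : theta 0%N = 1).
Hypothesis thetaS : forall i : nat, (1 <= i <= N.-1)%N ->
  theta i = (1 + Num.sqrt (1 + 4 * theta i.-1 ^+ 2)) / 2.
Hypothesis thetaN : theta N = (1 + Num.sqrt (1 + 8 * theta N.-1 ^+ 2)) / 2.
Hypothesis zetaN2 : zeta N.+2 = 0.
Hypothesis zetaN1 :
  zeta N.+1 = (theta N - 1) / (theta N ^+ 2 * (2 * theta N - 1)) * r ^+ 2.
Hypothesis zetaN : zeta N = theta N / (theta N - 1) * zeta N.+1.
Hypothesis zetaS : forall i : nat, (i < N)%N ->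
  zeta i = 2 * theta i / (2 * theta i - 1) * zeta i.+1.

Lemma theta_ge1 i : (i < N)%N -> 1 <= theta i.
Proof.
case: i => [|i] i_lt; first by rewrite theta0.
rewrite thetaS /=; last by rewrite -ltnS prednK.
apply: half_1Dsqrt_ge1.
have := sqr_ge0 (theta i); lra.
Qed.

Lemma thetaN_gt1 : 1 < theta N.
Proof.
rewrite thetaN; apply: half_1Dsqrt_gt1.
have t_ge1 : 1 <= theta N.-1 by apply: theta_ge1; rewrite ltn_predL.
have : 1 <= theta N.-1 ^+ 2 by rewrite expr2; nra.
lra.
Qed.

Lemma theta_sqrB i : (1 <= i <= N.-1)%N ->
  theta i ^+ 2 - theta i = theta i.-1 ^+ 2.
Proof.
move=> i_range; rewrite thetaS // half_1Dsqrt_sqrB; first by field.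
have := sqr_ge0 (theta i.-1); lra.
Qed.

Lemma thetaN_sqrB : theta N ^+ 2 - theta N = 2 * theta N.-1 ^+ 2.
Proof.
rewrite thetaN half_1Dsqrt_sqrB; first by field.
have := sqr_ge0 (theta N.-1); lra.
Qed.

Lemma zetaN1_gt0 : 0 < zeta N.+1.
Proof.
have := thetaN_gt1; rewrite zetaN1; set t := theta N => t_gt1.
rewrite mulr_gt0 ?exprn_gt0 // divr_gt0 ?mulr_gt0 ?exprn_gt0 //; lra.
Qed.

Lemma zeta_decr i : (i <= N)%N -> 0 < zeta i.+1 -> zeta i.+1 < zeta i.
Proof.
rewrite leq_eqVlt => /predU1P[-> | i_lt] zeta_gt0.
  rewrite zetaN ltr_ratio_scale //; have := thetaN_gt1; lra.
rewrite (zetaS _ i_lt) ltr_ratio_scale //.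
have := theta_ge1 _ i_lt; lra.
Qed.

Lemma zeta_gt0 i : (i <= N.+1)%N -> 0 < zeta i.
Proof.
move=> i_le; rewrite -(subKn i_le).
elim: (N.+1 - i)%N (leq_subr i N.+1) => [|k IHk] k_le.
  by rewrite subn0 zetaN1_gt0.
have Sm : (N.+1 - k = (N.+1 - k.+1).+1)%N by rewrite subnS prednK // subn_gt0.
have := IHk (ltnW k_le); rewrite Sm => zeta_gt0.
apply: (lt_trans zeta_gt0 (zeta_decr _ _ zeta_gt0)).
by rewrite -ltnS -Sm leq_subr.
Qed.

Lemma zeta_term i : (i < N)%N ->
  zeta i ^+ 2 / (zeta i - zeta i.+1) = 2 * theta i * zeta i.
Proof.
move=> i_lt; have t_ge1 := theta_ge1 _ i_lt.
have zeta_gt0 : 0 < zeta i.+1 by apply: zeta_gt0; rewrite ltnS ltnW.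
rewrite [in LHS](zetaS _ i_lt) sqr_ratio_div_subr; last 3 first.
- by apply/eqP; lra.
- by apply/eqP; lra.
- by rewrite gt_eqF.
by rewrite -(zetaS _ i_lt) [_ - _](_ : _ = 1) ?divr1 //; ring.
Qed.

Lemma zetaN_term : zeta N ^+ 2 / (zeta N - zeta N.+1) = theta N * zeta N.
Proof.
have t_gt1 := thetaN_gt1.
rewrite [in LHS]zetaN sqr_ratio_div_subr; last 3 first.
- by apply/eqP; lra.
- by apply/eqP; lra.
- by rewrite gt_eqF ?zetaN1_gt0.
by rewrite -zetaN [_ - _](_ : _ = 1) ?divr1 //; ring.
Qed.

Lemma sum_zeta_terms k : (1 <= k <= N)%N ->
  \sum_(j < k) zeta j ^+ 2 / (zeta j - zeta j.+1) = 4 * theta k.-1 ^+ 2 * zeta k.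
Proof.
elim: k => [//|k IHk] /andP[_ k_lt].
have t_ge1 := theta_ge1 _ k_lt.
rewrite big_ord_recr /= zeta_term // (zetaS _ k_lt).
case: k IHk k_lt t_ge1 => [|k] IHk k_lt t_ge1.
  by rewrite big_ord0 theta0; field.
rewrite IHk ?(ltnW k_lt) // (zetaS _ k_lt) -theta_sqrB /=; last first.
  by rewrite -ltnS prednK.
by field; apply/eqP; lra.
Qed.

Lemma sum_zeta_terms_N :
  \sum_(j < N.+1) zeta j ^+ 2 / (zeta j - zeta j.+1) = r ^+ 2.
Proof.
rewrite big_ord_recr /= sum_zeta_terms ?N_gt0 ?leqnn // zetaN_term.
have -> : 4 * theta N.-1 ^+ 2 = 2 * (theta N ^+ 2 - theta N).
  by rewrite thetaN_sqrB; ring.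
have t_gt1 := thetaN_gt1; rewrite zetaN zetaN1.
by field; rewrite !gt_eqF //; lra.
Qed.

Lemma zetaN_add_zetaN1 : zeta N + zeta N.+1 = r ^+ 2 / theta N ^+ 2.
Proof.
have t_gt1 := thetaN_gt1; rewrite zetaN zetaN1.
by field; rewrite !gt_eqF //; lra.
Qed.

Lemma enorm_zeta_col : enorm (\col_(j < N.+1)
  (- ((zeta j - zeta N.+2) / Num.sqrt (zeta j - zeta j.+1)))) = r.
Proof.
rewrite /enorm -[RHS]gtr0_norm // -sqrtr_sqr -sum_zeta_terms_N.
congr Num.sqrt; apply: eq_bigr => j _.
have zeta_gt0 : 0 < zeta j.+1 := zeta_gt0 _ (ltn_ord j).
rewrite mxE zetaN2 subr0 sqrrN expr_div_n sqr_sqrtr // subr_ge0 ltW //.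
exact: zeta_decr _ (ltn_ord j) zeta_gt0.
Qed.

End ZetaSequence.

Theorem lemma3 (R : realType) (r L : R) (N : nat) (theta zeta : nat -> R) :
  0 < r -> 0 < L -> (0 < N)%N ->
  theta 0%N = 1 ->
  (forall i : nat, (1 <= i <= N.-1)%N ->
     theta i = (1 + Num.sqrt (1 + 4 * theta i.-1 ^+ 2)) / 2) ->
  theta N = (1 + Num.sqrt (1 + 8 * theta N.-1 ^+ 2)) / 2 ->
  zeta N.+2 = 0 ->
  zeta N.+1 = (theta N - 1) / (theta N ^+ 2 * (2 * theta N - 1)) * r ^+ 2 ->
  zeta N = theta N / (theta N - 1) * zeta N.+1 ->
  (forall i : nat, (i < N)%N ->
     zeta i = 2 * theta i / (2 * theta i - 1) * zeta i.+1) ->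
  let x := \col_(j < N.+1)
             (- ((zeta j - zeta N.+2) / Num.sqrt (zeta j - zeta j.+1))) in
  let fN := L / 2 * (zeta N + zeta N.+1) in
  enorm x = r /\ fN = L * r ^+ 2 / (2 * theta N ^+ 2).
Proof.
move=> r_gt0 _ N_gt0 theta0 thetaS thetaN zetaN2 zetaN1 zetaN zetaS x fN.
split; first by apply: (@enorm_zeta_col _ r N theta zeta).
have t_gt1 : 1 < theta N by apply: (@thetaN_gt1 _ N theta).
rewrite /fN (@zetaN_add_zetaN1 _ r N theta zeta) //.
by field; rewrite gt_eqF //; lra.
Qed.
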